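(* Let $a>0$ and $0\le r_0<a$, and consider, in polar coordinates $(r,\theta)$ about a pole $O$, the circle of radius $a$ whose centre $C$ has polar coordinates $(r_0,\theta_0)$, so that the ray from $O$ in direction $\theta$ meets the circle at distance $$r(\theta)=r_0\cos(\theta-\theta_0)+\sqrt{a^2-r_0^2\sin^2(\theta-\theta_0)} .$$ Let $\theta_1<\theta_2<\theta_3<\theta_4<\theta_1+\pi$, set $\theta_{i+4}=\theta_i+\pi$ for $i=1,2,3,4$ and $\theta_9=\theta_1+2\pi$, and for $1\le i\le 8$ let $S_i=\frac12\int_{\theta_i}^{\theta_{i+1}} r(\theta)^2\,d\theta$ (the area of the $i$-th of the eight sectors cut from the disc by the four lines through $O$ in directions $\theta_1,\dots,\theta_4$). Suppose that $$(\theta_2-\theta_1)+(\theta_4-\theta_3)=\frac{\pi}{2}$$ and $$\sin 2(\theta_4-\theta_0)+\sin 2(\theta_2-\theta_0)=\sin 2(\theta_3-\theta_0)+\sin 2(\theta_1-\theta_0).$$ Then $$S_1+S_3+S_5+S_7=\frac{\pi}{2}a^2=S_2+S_4+S_6+S_8 .$$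
   Context: Polar coordinates are taken about the pole $O$; the point with polar coordinates $(r,\theta)$ is $O+r(\cos\theta,\sin\theta)$. The sector $S_i$ is the region $\{O+\rho(\cos\theta,\sin\theta):\ \theta_i\le\theta\le\theta_{i+1},\ 0\le\rho\le r(\theta)\}$. *)

From Stdlib Require Import Reals.
From Coquelicot Require Import Coquelicot.
Open Scope R_scope.

Definition rpol (a r0 th0 th : R) : R :=
  r0 * cos (th - th0) + sqrt (a ^ 2 - r0 ^ 2 * sin (th - th0) ^ 2).

Definition sector (a r0 th0 u v : R) : R :=
  / 2 * RInt (fun t => (rpol a r0 th0 t) ^ 2) u v.

(* The two intersections of the line through O in direction t with the circle
   lie at signed distances r(t) and -r(t + PI), the roots of
   x^2 - 2 r0 cos(t - th0) x - (a^2 - r0^2) = 0, so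
   r(t)^2 + r(t + PI)^2 = 2 a^2 + 2 r0^2 cos (2 (t - th0)).
   Integrating, a sector and its opposite sector together have area
   a^2 (v - u) + r0^2/2 (sin 2(v - th0) - sin 2(u - th0)).  The angle condition
   makes the a^2-terms of S1 + S5 + S3 + S7 add up to a^2 PI/2 and the sine
   condition makes the r0^2-terms cancel; the same happens for the even sectors. *)
From Stdlib Require Import Reals Lra Psatz.
From Coquelicot Require Import Coquelicot.
Open Scope R_scope.

Lemma is_RInt_shift {V : NormedModule R_AbsRing} (f : R -> V) (c u v : R) (l : V) :
  is_RInt f (u + c) (v + c) l -> is_RInt (fun t => f (t + c)) u v l.
Proof.
  intros Hf.
  rewrite <- (Rmult_1_l u), <- (Rmult_1_l v) in Hf.
  apply (is_RInt_ext (fun t => scal 1 (f (1 * t + c)))).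
  - intros t _. rewrite Rmult_1_l. exact (scal_one _).
  - now apply is_RInt_comp_lin.
Qed.

Section OppositeSectors.

Variables a r0 th0 : R.
Hypothesis r0_ge0 : 0 <= r0.
Hypothesis r0_lt_a : r0 < a.

Let rsq (t : R) : R := rpol a r0 th0 t ^ 2.

Lemma radicand_pos x : 0 < a ^ 2 - r0 ^ 2 * sin x ^ 2.
Proof.
  pose proof (sin2_cos2 x) as Hsc. unfold Rsqr in Hsc.
  assert (0 <= r0 ^ 2 * (1 - sin x ^ 2)) by (apply Rmult_le_pos; nra).
  nra.
Qed.

Lemma ex_RInt_rpol_sq u v : ex_RInt rsq u v.
Proof.
  apply (ex_RInt_continuous (V := R_CompleteNormedModule)). intros t _.
  apply (ex_derive_continuous (K := R_AbsRing) (V := R_NormedModule)).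
  unfold rsq, rpol. auto_derive.
  replace (t + - th0) with (t - th0) by ring.
  pose proof (radicand_pos (t - th0)). simpl in *. lra.
Qed.

Lemma rpol_sq_add_antipodal t :
  rsq t + rsq (t + PI) = 2 * (a ^ 2 + r0 ^ 2 * cos (2 * (t - th0))).
Proof.
  unfold rsq, rpol.
  replace (t + PI - th0) with ((t - th0) + PI) by ring.
  rewrite neg_cos, neg_sin, cos_2a.
  set (x := t - th0).
  replace ((- sin x) ^ 2) with (sin x ^ 2) by ring.
  pose proof (sqrt_sqrt _ (Rlt_le _ _ (radicand_pos x))) as Hsqrt.
  pose proof (sin2_cos2 x) as Hsc. unfold Rsqr in Hsc.
  set (D := sqrt (a ^ 2 - r0 ^ 2 * sin x ^ 2)) in *.
  nra.
Qed.

Lemma sector_add_antipodal u v :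
  sector a r0 th0 u v + sector a r0 th0 (u + PI) (v + PI)
  = a ^ 2 * (v - u) + r0 ^ 2 / 2 * (sin (2 * (v - th0)) - sin (2 * (u - th0))).
Proof.
  set (F t := 2 * a ^ 2 * t + r0 ^ 2 * sin (2 * (t - th0))).
  set (g t := 2 * (a ^ 2 + r0 ^ 2 * cos (2 * (t - th0)))).
  assert (Hpair : is_RInt g u v
            (RInt rsq u v + RInt rsq (u + PI) (v + PI))).
  { apply (is_RInt_ext (fun t => plus (rsq t) (rsq (t + PI)))).
    - intros t _. apply rpol_sq_add_antipodal.
    - apply (is_RInt_plus (V := R_NormedModule)).
      + apply (RInt_correct (V := R_CompleteNormedModule)), ex_RInt_rpol_sq.
      + apply is_RInt_shift.
        apply (RInt_correct (V := R_CompleteNormedModule)), ex_RInt_rpol_sq. }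
  assert (Hftc : is_RInt g u v (minus (F v) (F u))).
  { apply (is_RInt_derive (V := R_CompleteNormedModule) F).
    - intros t _. unfold F, g. auto_derive; [easy|].
      replace (t + - th0) with (t - th0) by ring. ring.
    - intros t _. apply (ex_derive_continuous (K := R_AbsRing) (V := R_NormedModule)).
      unfold g. auto_derive. easy. }
  pose proof (is_RInt_unique _ _ _ _ Hpair) as E1.
  pose proof (is_RInt_unique _ _ _ _ Hftc) as E2.
  unfold sector. fold rsq.
  unfold minus, plus, opp, F in E2; simpl in E2.
  lra.
Qed.

End OppositeSectors.

Theorem mainTheorem2 (a r0 th0 th1 th2 th3 th4 : R) :
  0 < a -> 0 <= r0 -> r0 < a ->
  th1 < th2 -> th2 < th3 -> th3 < th4 -> th4 < th1 + PI ->
  (th2 - th1) + (th4 - th3) = PI / 2 ->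
  sin (2 * (th4 - th0)) + sin (2 * (th2 - th0))
    = sin (2 * (th3 - th0)) + sin (2 * (th1 - th0)) ->
  sector a r0 th0 th1 th2 + sector a r0 th0 th3 th4
    + sector a r0 th0 (th1 + PI) (th2 + PI) + sector a r0 th0 (th3 + PI) (th4 + PI)
    = PI / 2 * a ^ 2 /\
  PI / 2 * a ^ 2
    = sector a r0 th0 th2 th3 + sector a r0 th0 th4 (th1 + PI)
      + sector a r0 th0 (th2 + PI) (th3 + PI) + sector a r0 th0 (th4 + PI) (th1 + 2 * PI).
Proof.
  intros _ r0_ge0 r0_lt_a _ _ _ _ Hangle Hsin.
  pose proof (sector_add_antipodal a r0 th0 r0_ge0 r0_lt_a th1 th2) as S12.
  pose proof (sector_add_antipodal a r0 th0 r0_ge0 r0_lt_a th3 th4) as S34.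
  pose proof (sector_add_antipodal a r0 th0 r0_ge0 r0_lt_a th2 th3) as S23.
  pose proof (sector_add_antipodal a r0 th0 r0_ge0 r0_lt_a th4 (th1 + PI)) as S41.
  replace (th1 + 2 * PI) with (th1 + PI + PI) by ring.
  replace (2 * (th1 + PI - th0)) with (2 * (th1 - th0) + 2 * PI) in S41 by ring.
  rewrite sin_plus, sin_2PI, cos_2PI in S41.
  split; nra.
Qed.
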